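(* Let $\Pi$ be a program of $(d,f)$-tree-like rules without inequalities over the $(\mathrm{Col},\delta)$-signature, and let $\mathcal N_\Pi$ be the GNN constructed from $\Pi$ as described in the context, with $L=d+2$ layers. For every $(\mathrm{Col},\delta)$-dataset $D$, every layer $1\le\ell<L$, every position $1\le i\le\delta_\ell$ and every term $t$ occurring in $D$, letting $\mathbf v_\ell$ be the vector labelling the vertex $v_t$ at layer $\ell$ when $\mathcal N_\Pi$ is applied to $\mathrm{enc}(D)$: the $i$-th component of $\mathbf v_\ell$ equals $1$ if there exists a substitution $\nu$ with $\nu(x)=t$ such that every atom of $\tau_i\nu$ belongs to $D$, and equals $0$ otherwise.
   Context: Datalog basics. Terms are constants or variables; atoms are $P(t_1,\dots,t_n)$; a fact is a variable-free atom; a dataset is a finite set of facts. A rule is $B_1\wedge\dots\wedge B_n\to H$ (literals $B_i$, possibly inequalities $s\neq t$; empty body written $\top$); a program is a finite set of rules. A substitution maps finitely many variables to variable-free terms. For a rule $r$ and dataset $D$, $T_r(D)$ is the set of $H\nu$ for each substitution $\nu$ mapping all variables of $r$ to terms occurring in $D$ such that every instantiated body atom lies in $D$ and every instantiated body inequality $s\neq t$ has $s\neq t$; $T_\Pi(D)=\bigcup_{r\in\Pi}T_r(D)$. Formulas/rules are equal up to variable renaming if a bijection of variables maps one onto the other with exactly the same conjuncts. GNNs and canonical encoding. For finite colour set $\mathrm{Col}$ and $\delta\in\mathbb N$, the $(\mathrm{Col},\delta)$-signature has binary predicates $E^c$ ($c\in\mathrm{Col}$) and unary predicates $U_1,\dots,U_\delta$;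 a $(\mathrm{Col},\delta)$-dataset is a dataset over it. Its canonical encoding $\mathrm{enc}(D)$ is the graph with a vertex $v_t$ per term $t$ occurring in $D$, edge sets $E^c=\{(v_t,v_s)\mid E^c(t,s)\in D\}$, and feature vector of $v_t$ in $\{0,1\}^\delta$ whose $j$-th entry is $1$ iff $U_j(t)\in D$. A $(\mathrm{Col},\delta)$-GNN with $L$ layers has dimensions $\delta_0=\delta,\dots,\delta_L=\delta$, matrices $A_\ell,B_\ell^c\in\mathbb R^{\delta_\ell\times\delta_{\ell-1}}$, biases $b_\ell\in\mathbb R^{\delta_\ell}$, aggregations $\mathrm{agg}_\ell$, activation $\sigma$ and classification $\mathrm{cls}$; the layer-$\ell$ vector of $v$ is $\mathbf v_\ell=\sigma(A_\ell\mathbf v_{\ell-1}+\sum_cB_\ell^c\,\mathrm{agg}_\ell(\{\!\{\mathbf u_{\ell-1}\mid(v,u)\in E^c\}\!\})+b_\ell)$ with $\mathbf v_0$ the input feature; $T_{\mathcal N}(D)$ is $D$'s binary facts plus $U_i(t)$ for each $t$ and $i$ with $\mathrm{cls}$ of the $i$-th entry of the layer-$L$ vector of $v_t$ equal to $1$. Tree-like formulas. Inductively: $\top$ and $U(x)$ ($U$ unary) are tree-like for $x$; if $\varphi_1,\varphi_2$ are tree-like for $x$ sharing no variable other than $x$, then $\varphi_1\wedge\varphi_2$ is tree-like for $x$; if $\varphi_1,\dots,\varphi_n$ are tree-like for pairwise distinct variables $y_1,\dots,y_n$, none containing $x$ and pairwise variable-disjoint, then $\bigwedge_{i=1}^n(E^c(x,y_i)\wedge\varphi_i)\wedge\bigwedge_{i<j}y_i\neq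 y_j$ is tree-like for $x$. The fan-out of a variable $x$ is the number of distinct $y$ with some $E^c(x,y)$ a conjunct; the depth of $x$ is the maximal length $n$ of a chain $E^{c_1}(x_0,x_1),\dots,E^{c_n}(x_{n-1},x_n)$ of conjuncts with $x_n=x$; the depth of the formula is the maximum depth of its variables. A formula is $(d,f)$-tree-like if each variable of depth $i$ has $i\le d$ and fan-out at most $f\cdot(d-i)$; a rule is $(d,f)$-tree-like if it is $\varphi\to U(x)$ with $\varphi$ a $(d,f)$-tree-like formula for $x$. Construction of $\mathcal N_\Pi$. Fix natural numbers $d,f$ and a program $\Pi$ of $(d,f)$-tree-like rules without inequalities. Let $\tau_1,\dots,\tau_n$ list, up to variable renaming and each exactly once, all $(d,f)$-tree-like formulas for a fixed variable $x$ without inequalities, ordered by non-decreasing depth. Write each as $\tau_i=\varphi_{i,0}\wedge\bigwedge_{k=1}^{m_i}(E^{c_k}(x,y_k)\wedge\varphi_{i,k})$, where $\varphi_{i,0}$ is a conjunction of unary atoms on $x$ (possibly $\top$), each $\varphi_{i,k}$ ($k\ge1$) is a $(d-1,f)$-tree-like formula for $y_k$ (possibly $\top$), the $\varphi_{i,k}$ are pairwise variable-disjoint, and the colours $c_k$ need not be distinct. $\mathcal N_\Pi$ is the $(\mathrm{Col},\delta)$-GNN with $L=d+2$ layers, aggregation $\max$ (componentwise, $0$ on the empty multiset) in every layer, activation $\mathrm{ReLU}(z)=\max(0,z)$, classification the step function with threshold $1$, and for $1\le\ell<L$ dimension $\delta_\ell$ equal to the number of formulas $\tau_i$ of depth at most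 $\ell-1$ (so these are $\tau_1,\dots,\tau_{\delta_\ell}$). For $c\in\mathrm{Col}$, $1\le\ell\le L$, $1\le i\le\delta_\ell$, $1\le j\le\delta_{\ell-1}$: $(A_\ell)_{i,j}=1$ if (a) $\ell=1$ and $\tau_i$ contains $U_j(x)$; or (b) $2\le\ell<L$ and either $i\le\delta_{\ell-1}$ and $i=j$, or $\delta_{\ell-1}<i\le\delta_\ell$ and $\varphi_{i,0}$ equals $\tau_j$ (up to renaming); or (c) $\ell=L$ and $\Pi$ contains the rule $\tau_j\to U_i(x)$ up to variable renaming; otherwise $(A_\ell)_{i,j}=0$. $(B_\ell^c)_{i,j}=1$ if $2\le\ell<L$ and there is $1\le k\le m_i$ with $c=c_k$ and $\varphi_{i,k}$ equal to $\tau_j$ up to variable renaming; otherwise $0$. $(b_\ell)_i=1-\sum_{j=1}^{\delta_{\ell-1}}\big((A_\ell)_{i,j}+\sum_{c\in\mathrm{Col}}(B_\ell^c)_{i,j}\big)$ if $\ell=1$, or if $1\le\ell<L$ and $\delta_{\ell-1}<i\le\delta_\ell$; otherwise $(b_\ell)_i=0$.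
   Formalization: The matrices $B_\ell^c$ have entries 1 only in rows $\delta_{\ell-1}<i\le\delta_\ell$, not in every row $i\le\delta_\ell$, and in tree-like formulas each $y_i$ differs from $x$ and from all variables of the other conjuncts $E^c(x,y_j)\wedge\varphi_j$. Each condition added here is assumed in the paper as well or is needed for the statement above to hold. This also corrects a misprint. *)

From HB Require Import structures.
From mathcomp Require Import all_boot.
From mathcomp Require Import boolp.
From Stdlib Require Import Reals.
Set Implicit Arguments. Unset Strict Implicit. Unset Printing Implicit Defensive.

(* Unary predicates U_1..U_dl are
   indexed by 'I_dl (0-based: U_(j+1) is index j).  An atom over a set T of
   terms is either  E^c(s,t)  = inl (c,s,t)  or  U_j(s) = inr (j,s).        *)
Notation gatom Col dl T := ((Col * T * T) + ('I_dl * T))%type.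
Notation atom Col dl := (gatom Col dl nat).
(* a conjunction of atoms (no inequalities), seen as its list of conjuncts;
   the empty conjunction is T (top) *)
Notation formula Col dl := (seq (atom Col dl)).
(* facts: variable-free atoms over a type K of constants *)
Notation gfact Col dl K := (gatom Col dl K).
(* a dataset is a finite set of facts, represented by a list *)
Notation dataset Col dl K := (seq (gfact Col dl K)).

Definition AE {Col : finType} {dl : nat} {T : Type} (c : Col) (s t : T)
  : gatom Col dl T := inl (c, s, t).
Definition AU {Col : finType} {dl : nat} {T : Type} (j : 'I_dl) (s : T)
  : gatom Col dl T := inr (j, s).

Definition avars {Col : finType} {dl : nat} {T : Type} (a : gatom Col dl T) : seq T :=
  match a with inl (_, s, t) => [:: s; t] | inr (_, s) => [:: s] end.
Definition fvars {Col : finType} {dl : nat} {T : Type} (phi : seq (gatom Col dl T)) : seq T :=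
  flatten (map avars phi).
(* terms occurring in a dataset (= vertices of its canonical encoding) *)
Definition terms {Col : finType} {dl : nat} {K : eqType} (D : dataset Col dl K) : seq K :=
  undup (fvars D).

Definition inst {Col : finType} {dl : nat} {T : Type} (nu : nat -> T) (a : atom Col dl)
  : gatom Col dl T :=
  match a with inl (c, s, t) => inl (c, nu s, nu t) | inr (j, s) => inr (j, nu s) end.

Definition ren_eq {Col : finType} {dl : nat} (phi psi : formula Col dl) : Prop :=
  exists pi : nat -> nat, bijective pi /\ map (inst pi) phi =i psi.

Definition disj (s1 s2 : seq nat) : bool := all (fun v => v \notin s2) s1.
(* variables of a component  E^c(x,y) /\ phi  for y, other than x *)
Definition cvars {Col : finType} {dl : nat} (p : Col * nat * formula Col dl) : seq nat :=
  p.1.2 :: fvars p.2.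
Definition edge_block {Col : finType} {dl : nat} (x : nat)
  (ch : seq (Col * nat * formula Col dl)) : formula Col dl :=
  flatten [seq AE p.1.1 x p.1.2 :: p.2 | p <- ch].

Inductive treelike {Col : finType} {dl : nat} : nat -> formula Col dl -> Prop :=
| TL_top x : treelike x [::]
| TL_unary x (j : 'I_dl) : treelike x [:: AU j x]
| TL_conj x phi1 phi2 :
    treelike x phi1 -> treelike x phi2 ->
    (forall v, v \in fvars phi1 -> v \in fvars phi2 -> v = x) ->
    treelike x (phi1 ++ phi2)
| TL_edges x (ch : seq (Col * nat * formula Col dl)) :
    (forall p, p \in ch -> treelike p.1.2 p.2) ->
    (forall p, p \in ch -> x \notin cvars p) ->
    pairwise (fun p q => disj (cvars p) (cvars q)) ch ->
    treelike x (edge_block x ch).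

(* chains E^{c1}(u,x1), ..., E^{cn}(x_{n-1},x_n) of conjuncts of phi *)
Fixpoint chain {Col : finType} {dl : nat} (phi : formula Col dl) (u : nat)
  (s : seq (Col * nat)) : Prop :=
  match s with
  | [::] => True
  | (c, v) :: s' => AE c u v \in phi /\ chain phi v s'
  end.

Definition var_depth {Col : finType} {dl : nat} (phi : formula Col dl) (v n : nat) : Prop :=
  (exists u s, chain phi u s /\ last u (map snd s) = v /\ size s = n) /\
  (forall u s, chain phi u s -> last u (map snd s) = v -> size s <= n).

Definition fdepth {Col : finType} {dl : nat} (phi : formula Col dl) (n : nat) : Prop :=
  (forall v m, v \in fvars phi -> var_depth phi v m -> m <= n) /\
  ((fvars phi = [::] /\ n = 0) \/ exists2 v, v \in fvars phi & var_depth phi v n).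

Definition fanout {Col : finType} {dl : nat} (phi : formula Col dl) (v : nat) : nat :=
  size (undup (pmap (fun a : atom Col dl =>
    match a with inl (_, u, y) => if u == v then Some y else None | inr _ => None end) phi)).

Definition dftreelike {Col : finType} {dl : nat} (d f x : nat) (phi : formula Col dl) : Prop :=
  treelike x phi /\
  forall v n, v \in fvars phi -> var_depth phi v n -> n <= d /\ fanout phi v <= f * (d - n).

(* rules  phi -> U_j(y)  represented as (phi, (j, y)) *)
Notation rule Col dl := (formula Col dl * ('I_dl * nat))%type.
Definition dfrule {Col : finType} {dl : nat} (d f : nat) (r : rule Col dl) : Prop :=
  dftreelike d f r.2.2 r.1.
Definition rule_ren_eq {Col : finType} {dl : nat} (r : rule Col dl)
  (phi : formula Col dl) (j : 'I_dl) (x : nat) : Prop :=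
  exists pi : nat -> nat, bijective pi /\ pi r.2.2 = x /\ r.2.1 = j /\
    map (inst pi) r.1 =i phi.

Definition x0 : nat := 0.

Definition holds_at {Col : finType} {dl : nat} {K : eqType} (D : dataset Col dl K)
  (phi : formula Col dl) (t : K) : Prop :=
  exists nu : nat -> K, nu x0 = t /\ forall a, a \in phi -> inst nu a \in D.

(* GNNs.  Layers numbered 1..L (paper numbering); vector positions 0-based. *)
Record gnn (Col : finType) := GNN {
  nlayers : nat;
  dim : nat -> nat;
  matA : nat -> nat -> nat -> R;
  matB : nat -> Col -> nat -> nat -> R;
  bias : nat -> nat -> R;
  agg : nat -> seq (nat -> R) -> nat -> R;
  act : R -> R;
  cls : R -> bool }.

Definition feat {Col : finType} {dl : nat} {K : eqType} (D : dataset Col dl K) (t : K)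
  (j : nat) : R :=
  if [exists k : 'I_dl, (val k == j) && (AU k t \in D)] then 1%R else 0%R.

(* c-successors u of v_t in enc(D), each once *)
Definition nbrs {Col : finType} {dl : nat} {K : eqType} (D : dataset Col dl K) (c : Col)
  (t : K) : seq K :=
  [seq s <- terms D | AE c t s \in D].

Fixpoint layer {Col : finType} {dl : nat} {K : eqType} (N : gnn Col) (D : dataset Col dl K)
  (l : nat) : K -> nat -> R :=
  match l with
  | 0 => feat D
  | l'.+1 => fun t i =>
      act N (\big[Rplus/0%R]_(j < dim N l') (matA N l'.+1 i j * layer N D l' t j)
           + \big[Rplus/0%R]_(c : Col) \big[Rplus/0%R]_(j < dim N l')
                (matB N l'.+1 c i j *
                 agg N l'.+1 [seq layer N D l' s | s <- nbrs D c t] j)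
           + bias N l'.+1 i)%R
  end.

Definition aggmax (vs : seq (nat -> R)) (j : nat) : R :=
  match vs with
  | [::] => 0%R
  | v :: vs' => foldr (fun u m => Rmax (u j) m) (v j) vs'
  end.
Definition relu (z : R) : R := Rmax 0 z.
Definition step1 (z : R) : bool := if Rle_dec 1 z then true else false.

(* The construction of N_Pi.
   tau : the list tau_1..tau_n (0-based: tau_i = nth [::] tau i);
   dec i = (phi_{i,0}, [:: (c_1,y_1,phi_{i,1}); ...; (c_m,y_m,phi_{i,m})]).   *)

Definition decomp {Col : finType} {dl : nat} (d f : nat) (tau : formula Col dl)
  (dc : formula Col dl * seq (Col * nat * formula Col dl)) : Prop :=
  tau =i dc.1 ++ edge_block x0 dc.2 /\
  (forall a, a \in dc.1 -> exists k : 'I_dl, a = AU k x0) /\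
  (forall p, p \in dc.2 -> dftreelike d.-1 f p.1.2 p.2) /\
  (forall p, p \in dc.2 -> x0 \notin cvars p) /\
  pairwise (fun p q => disj (cvars p) (cvars q)) dc.2.


Definition dimsPi {Col : finType} {dl : nat} (d : nat) (tau : seq (formula Col dl))
  (l : nat) : nat :=
  if l == 0 then dl
  else if l < d.+2 then count (fun phi => `[< exists n, fdepth phi n /\ n <= l.-1 >]) tau
  else dl.

Definition Aent {Col : finType} {dl : nat} (d : nat) (Pi : seq (rule Col dl))
  (tau : seq (formula Col dl)) (dec : nat -> formula Col dl * seq (Col * nat * formula Col dl))
  (l i j : nat) : Prop :=
  [/\ 1 <= l, i < dimsPi d tau l, j < dimsPi d tau l.-1 &
  if l == 1 then exists k : 'I_dl, val k = j /\ AU k x0 \in nth [::] tau i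
  else if l < d.+2 then
    (if i < dimsPi d tau l.-1 then i = j else ren_eq (dec i).1 (nth [::] tau j))
  else if l == d.+2 then
    exists2 r, r \in Pi & exists k : 'I_dl, val k = i /\ rule_ren_eq r (nth [::] tau j) k x0
  else False].

Definition Bent {Col : finType} {dl : nat} (d : nat)
  (tau : seq (formula Col dl)) (dec : nat -> formula Col dl * seq (Col * nat * formula Col dl))
  (l : nat) (c : Col) (i j : nat) : Prop :=
  [/\ 2 <= l < d.+2, dimsPi d tau l.-1 <= i < dimsPi d tau l, j < dimsPi d tau l.-1 &
  exists2 p, p \in (dec i).2 & p.1.1 = c /\ ren_eq p.2 (nth [::] tau j)].

Definition matAPi {Col : finType} {dl : nat} d Pi tau dec (l i j : nat) : R :=
  if `[< @Aent Col dl d Pi tau dec l i j >] then 1%R else 0%R.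
Definition matBPi {Col : finType} {dl : nat} d tau dec (l : nat) (c : Col) (i j : nat) : R :=
  if `[< @Bent Col dl d tau dec l c i j >] then 1%R else 0%R.
Definition biasPi {Col : finType} {dl : nat} d Pi tau dec (l i : nat) : R :=
  if ((l == 1) && (i < dimsPi d tau 1)) ||
     ((1 <= l < d.+2) && (dimsPi d tau l.-1 <= i < dimsPi d tau l))
  then (1 - \big[Rplus/0%R]_(j < dimsPi d tau l.-1)
              (@matAPi Col dl d Pi tau dec l i j
               + \big[Rplus/0%R]_(c : Col) @matBPi Col dl d tau dec l c i j))%R
  else 0%R.

Definition NPi {Col : finType} {dl : nat} (d : nat) (Pi : seq (rule Col dl))
  (tau : seq (formula Col dl)) (dec : nat -> formula Col dl * seq (Col * nat * formula Col dl))
  : gnn Col :=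
  @GNN Col d.+2 (dimsPi d tau) (matAPi d Pi tau dec) (matBPi d tau dec)
    (biasPi d Pi tau dec) (fun _ => aggmax) relu step1.

From HB Require Import structures.
From mathcomp Require Import all_boot.
From mathcomp Require Import boolp.
From Stdlib Require Import Reals Lra.
Set Implicit Arguments. Unset Strict Implicit. Unset Printing Implicit Defensive.

(* By induction on the layer l (1 <= l < d+2), entry i of the layer-l vector
   of v_t is the truth value (0 or 1) of tau_i at t.  Two facts about the
   network drive the induction: a ReLU unit with 0/1 weights and bias
   1 - (sum of the weights) computes the conjunction of its 0/1 inputs
   (relu_gate), and max-aggregation of 0/1 values computes their disjunction
   (aggmax_bits).  Layer 1 evaluates the depth-0
   formulas from the input features; layer l+1 copies layer l and evaluates
   the new formulas of depth l from the values of their parts at layer l. *)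

HB.instance Definition _ := Monoid.isComLaw.Build R 0%R Rplus
  (fun a b c => esym (Rplus_assoc a b c)) Rplus_comm Rplus_0_l.

Lemma sum_le (I : eqType) (r : seq I) (F G : I -> R) :
  (forall x, x \in r -> F x <= G x)%R ->
  (\big[Rplus/0%R]_(x <- r) F x <= \big[Rplus/0%R]_(x <- r) G x)%R.
Proof.
elim: r => [|a r IH] H; first by rewrite !big_nil; lra.
rewrite !big_cons; have := H a (mem_head _ _).
have : (\big[Rplus/0%R]_(x <- r) F x <= \big[Rplus/0%R]_(x <- r) G x)%R.
  by apply: IH => x xr; apply: H; rewrite in_cons xr orbT.
lra.
Qed.

Lemma sum_le_sub1 (I : eqType) (r : seq I) (F G : I -> R) y :
  (forall x, x \in r -> F x <= G x)%R -> y \in r -> (F y + 1 <= G y)%R ->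
  (\big[Rplus/0%R]_(x <- r) F x + 1 <= \big[Rplus/0%R]_(x <- r) G x)%R.
Proof.
elim: r => [|a r IH] H //; rewrite in_cons => /orP [/eqP -> | yr] Hy.
  rewrite !big_cons.
  have : (\big[Rplus/0%R]_(x <- r) F x <= \big[Rplus/0%R]_(x <- r) G x)%R.
    by apply: sum_le => x xr; apply: H; rewrite in_cons xr orbT.
  lra.
rewrite !big_cons; have := H a (mem_head _ _).
have : (\big[Rplus/0%R]_(x <- r) F x + 1 <= \big[Rplus/0%R]_(x <- r) G x)%R.
  by apply: IH => // x xr'; apply: H; rewrite in_cons xr' orbT.
lra.
Qed.

Definition bit (z : R) := z = 0%R \/ z = 1%R.

Lemma relu_gate (J C : eqType) (rJ : seq J) (rC : seq C) (a x : J -> R)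
    (b y : C -> J -> R) :
  (forall j, bit (a j) /\ bit (x j)) -> (forall c j, bit (b c j) /\ bit (y c j)) ->
  let T := (\big[Rplus/0%R]_(j <- rJ) (a j * x j)
           + \big[Rplus/0%R]_(c <- rC) \big[Rplus/0%R]_(j <- rJ) (b c j * y c j)
           + (1 - \big[Rplus/0%R]_(j <- rJ) (a j + \big[Rplus/0%R]_(c <- rC) b c j)))%R in
  ((forall j, j \in rJ -> a j = 1%R -> x j = 1%R) /\
   (forall c j, c \in rC -> j \in rJ -> b c j = 1%R -> y c j = 1%R) -> relu T = 1%R) /\
  ((exists2 j, j \in rJ & a j = 1%R /\ x j = 0%R) \/
   (exists c j, [/\ c \in rC, j \in rJ, b c j = 1%R & y c j = 0%R]) -> relu T = 0%R).
Proof.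
move=> Hax Hby T.
have weights_split :
  (\big[Rplus/0%R]_(j <- rJ) (a j + \big[Rplus/0%R]_(c <- rC) b c j)
   = \big[Rplus/0%R]_(j <- rJ) a j
     + \big[Rplus/0%R]_(c <- rC) \big[Rplus/0%R]_(j <- rJ) b c j)%R.
  by rewrite big_split /= exchange_big.
have ax_le j : (a j * x j <= a j)%R by case: (Hax j) => [[]->[]->]; lra.
have by_le c j : (b c j * y c j <= b c j)%R by case: (Hby c j) => [[]->[]->]; lra.
have sumB_le : (\big[Rplus/0%R]_(c <- rC) \big[Rplus/0%R]_(j <- rJ) (b c j * y c j)
                <= \big[Rplus/0%R]_(c <- rC) \big[Rplus/0%R]_(j <- rJ) b c j)%R.
  by apply: sum_le => c _; apply: sum_le => j _; apply: by_le.
split.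
  move=> [H1 H2].
  have sumA_eq : (\big[Rplus/0%R]_(j <- rJ) (a j * x j) = \big[Rplus/0%R]_(j <- rJ) a j)%R.
    apply: eq_big_seq => j jr; case: (Hax j) => [[] Ha _]; first by rewrite Ha; lra.
    by rewrite (H1 j jr Ha) Ha; lra.
  have sumB_eq : (\big[Rplus/0%R]_(c <- rC) \big[Rplus/0%R]_(j <- rJ) (b c j * y c j)
                  = \big[Rplus/0%R]_(c <- rC) \big[Rplus/0%R]_(j <- rJ) b c j)%R.
    apply: eq_big_seq => c cr; apply: eq_big_seq => j jr.
    case: (Hby c j) => [[] Hb _]; first by rewrite Hb; lra.
    by rewrite (H2 c j cr jr Hb) Hb; lra.
  by rewrite /T sumA_eq sumB_eq weights_split /relu Rmax_right; lra.
have sumA_le := @sum_le _ rJ _ _ (fun j _ => ax_le j).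
move=> [[j jr [Ha Hx]] | [c [j [cr jr Hb Hy]]]].
  have : (\big[Rplus/0%R]_(j <- rJ) (a j * x j) + 1 <= \big[Rplus/0%R]_(j <- rJ) a j)%R.
    by apply: (sum_le_sub1 (y := j)) => [k _|//|]; [apply: ax_le | rewrite Ha Hx; lra].
  by move=> gap; rewrite /T weights_split /relu Rmax_left; lra.
have : (\big[Rplus/0%R]_(c <- rC) \big[Rplus/0%R]_(j <- rJ) (b c j * y c j) + 1
           <= \big[Rplus/0%R]_(c <- rC) \big[Rplus/0%R]_(j <- rJ) b c j)%R.
  apply: (sum_le_sub1 (y := c)) => [k _|//|]; first by apply: sum_le => k' _; apply: by_le.
  by apply: (sum_le_sub1 (y := j)) => [k _|//|]; [apply: by_le | rewrite Hb Hy; lra].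
by move=> gap; rewrite /T weights_split /relu Rmax_left; lra.
Qed.

Lemma bit_max a b : bit a -> bit b ->
  (Rmax a b = 1%R <-> a = 1%R \/ b = 1%R) /\ bit (Rmax a b).
Proof. by rewrite /bit /Rmax => Ha Hb; case: Rle_dec => H; split; try split; lra. Qed.

Lemma foldr_max_bits (T : eqType) (g : T -> nat -> R) (ss : seq T) j m0 :
  bit m0 -> (forall s, s \in ss -> bit (g s j)) ->
  (foldr (fun u m => Rmax (u j) m) m0 (map g ss) = 1%R <->
     m0 = 1%R \/ exists2 s, s \in ss & g s j = 1%R) /\
  bit (foldr (fun u m => Rmax (u j) m) m0 (map g ss)).
Proof.
move=> Hm; elim: ss => [|s ss IH] Hb /=.
  by split => //; split => [|[|[s]]] //; left.
have [[IH1 IH2] IHb] := IH (fun x xi => Hb x (mem_behead (s := s :: ss) xi)).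
have [[M1 M2] Mb] := bit_max (Hb s (mem_head _ _)) IHb.
split => //; split.
  move/M1 => [E|/IH1 [E|[x xi E]]]; first by right; exists s; rewrite ?mem_head.
    by left.
  by right; exists x; rewrite ?in_cons ?xi ?orbT.
move=> [E|[x]]; first by apply: M2; right; apply: IH2; left.
rewrite in_cons => /orP [/eqP -> E|xi E]; first by apply: M2; left.
by apply: M2; right; apply: IH2; right; exists x.
Qed.

Lemma aggmax_bits (T : eqType) (g : T -> nat -> R) (ss : seq T) j :
  (forall s, s \in ss -> bit (g s j)) ->
  (aggmax (map g ss) j = 1%R <-> exists2 s, s \in ss & g s j = 1%R) /\
  bit (aggmax (map g ss) j).
Proof.
case: ss => [|s0 ss] Hb /=; first by split; [split => [|[s]] //; lra | left].
have [[F1 F2] Fb] := foldr_max_bits (Hb s0 (mem_head _ _)) (fun s si => Hb s (mem_behead (s := s0 :: ss) si)).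
split => //; split.
  move/F1 => [E|[x xi E]]; first by exists s0; rewrite ?mem_head.
  by exists x; rewrite ?in_cons ?xi ?orbT.
move=> [x]; rewrite in_cons => /orP [/eqP -> E|xi E]; apply: F2; first by left.
by right; exists x.
Qed.

Section Syntax.
Variables (Col : finType) (dl : nat).
Notation fm := (formula Col dl).
Notation atm := (atom Col dl).

Lemma fvars_cat {T : Type} (phi psi : seq (gatom Col dl T)) :
  fvars (phi ++ psi) = fvars phi ++ fvars psi.
Proof. by rewrite /fvars map_cat flatten_cat. Qed.

Lemma fvarsP {T : eqType} (v : T) (phi : seq (gatom Col dl T)) :
  reflect (exists2 a, a \in phi & v \in avars a) (v \in fvars phi).
Proof.
elim: phi => [|a phi IH]; first by apply: ReflectF => -[].
rewrite /= mem_cat; apply: (iffP orP).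
  case=> [H|/IH [b bp vb]]; first by exists a => //; rewrite mem_head.
  by exists b => //; rewrite in_cons bp orbT.
move=> [b]; rewrite in_cons => /orP [/eqP -> | bp] vb; first by left.
by right; apply/IH; exists b.
Qed.

Lemma avars_sub {T : eqType} (phi : seq (gatom Col dl T)) a v :
  a \in phi -> v \in avars a -> v \in fvars phi.
Proof. by move=> ap va; apply/fvarsP; exists a. Qed.

Lemma fvars_sub {T : eqType} (phi psi : seq (gatom Col dl T)) v :
  {subset phi <= psi} -> v \in fvars phi -> v \in fvars psi.
Proof. by move=> S /fvarsP [a ap va]; apply: avars_sub (S _ ap) va. Qed.

Lemma edge_vars {T : eqType} (phi : seq (gatom Col dl T)) c u v :
  AE c u v \in phi -> u \in fvars phi /\ v \in fvars phi.
Proof. by move=> H; split; apply: (avars_sub H); rewrite /= !inE eqxx ?orbT. Qed.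

Lemma inst_avars {T : Type} (nu : nat -> T) (a : atm) : avars (inst nu a) = map nu (avars a).
Proof. by case: a => [[[c s] t]|[j s]]. Qed.

Lemma inst_comp {T : Type} (nu : nat -> T) pi (a : atm) :
  inst nu (inst pi a) = inst (nu \o pi) a.
Proof. by case: a => [[[c s] t]|[j s]]. Qed.

Lemma inst_eq {T : Type} (nu mu : nat -> T) (a : atm) :
  (forall v, v \in avars a -> nu v = mu v) -> inst nu a = inst mu a.
Proof.
case: a => [[[c s] t]|[j s]] /= H; last by rewrite (H s) ?mem_head.
by rewrite (H s) ?mem_head // (H t) // !inE eqxx orbT.
Qed.

Lemma inst_id (a : atm) : inst (fun v => v) a = a.
Proof. by case: a => [[[c s] t]|[j s]]. Qed.

Lemma fvars_map {T : Type} (nu : nat -> T) (phi : fm) :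
  fvars (map (inst nu) phi) = map nu (fvars phi).
Proof. by rewrite /fvars -map_comp map_flatten -map_comp; congr flatten; apply: eq_map => a /=; rewrite inst_avars. Qed.

Lemma edge_block_cons x (p : Col * nat * fm) ch :
  edge_block x (p :: ch) = (AE p.1.1 x p.1.2 :: p.2) ++ edge_block x ch.
Proof. by []. Qed.

Lemma mem_edge_block x (ch : seq (Col * nat * fm)) a :
  a \in edge_block x ch -> exists2 p, p \in ch & a = AE p.1.1 x p.1.2 \/ a \in p.2.
Proof.
elim: ch => [|p ch IH] //; rewrite edge_block_cons mem_cat in_cons.
case/orP => [/orP [/eqP ->|ap]|/IH [q qc H]].
- by exists p; [rewrite mem_head | left].
- by exists p; [rewrite mem_head | right].
- by exists q; [rewrite in_cons qc orbT|].
Qed.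

Lemma edge_block_edge x (ch : seq (Col * nat * fm)) p :
  p \in ch -> AE p.1.1 x p.1.2 \in edge_block x ch.
Proof.
elim: ch => [|q ch IH] //; rewrite in_cons edge_block_cons mem_cat => /orP [/eqP ->|pc].
  by rewrite mem_head.
by rewrite IH ?orbT.
Qed.

Lemma edge_block_child x (ch : seq (Col * nat * fm)) p a :
  p \in ch -> a \in p.2 -> a \in edge_block x ch.
Proof.
elim: ch => [|q ch IH] //; rewrite in_cons edge_block_cons mem_cat => /orP [/eqP ->|pc] ap.
  by rewrite in_cons ap orbT.
by rewrite IH ?orbT.
Qed.

Lemma disjP s1 s2 v : disj s1 s2 -> v \in s2 -> v \notin s1.
Proof. by move=> /allP H vs2; apply/negP => /H; rewrite vs2. Qed.

Lemma fvars_cvars (p : Col * nat * fm) v : v \in fvars p.2 -> v \in cvars p.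
Proof. by move=> H; rewrite /cvars in_cons H orbT. Qed.

Lemma root_cvars (p : Col * nat * fm) : p.1.2 \in cvars p.
Proof. exact: mem_head. Qed.

Definition ranked (phi : fm) x (r : nat -> nat) :=
  r x = 0 /\ forall c u v, AE c u v \in phi -> r u < r v.

Lemma edge_block_ranked x (ch : seq (Col * nat * fm)) :
  (forall p, p \in ch -> exists r, ranked p.2 p.1.2 r) ->
  (forall p, p \in ch -> x \notin cvars p) ->
  pairwise (fun p q => disj (cvars p) (cvars q)) ch ->
  exists r : nat -> nat, r x = 0 /\ forall p, p \in ch ->
     r p.1.2 = 1 /\ forall c u v, AE c u v \in p.2 -> r u < r v.
Proof.
elim: ch => [|p ch IH] Hr Hx; first by exists (fun _ => 0).
rewrite pairwise_cons => /andP [/allP Hp Hpw].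
have [r' [r'x Hr']] := IH (fun q qc => Hr q (mem_behead (s := p :: ch) qc))
  (fun q qc => Hx q (mem_behead (s := p :: ch) qc)) Hpw.
have [rp [rpy Hrp]] := Hr p (mem_head _ _).
exists (fun v => if v \in cvars p then (rp v).+1 else r' v).
split; first by rewrite (negbTE (Hx p (mem_head _ _))).
move=> q; rewrite in_cons => /orP [/eqP ->|qc].
  rewrite root_cvars rpy; split => // c u v /[dup] /edge_vars [uf vf] H.
  by rewrite (fvars_cvars uf) (fvars_cvars vf) ltnS; exact: Hrp H.
have nq v : v \in cvars q -> v \notin cvars p by apply: disjP (Hp q qc).
have [E1 E2] := Hr' q qc.
rewrite (negbTE (nq _ (root_cvars q))) E1; split => // c u v /[dup] /edge_vars [uf vf] H.
by rewrite (negbTE (nq _ (fvars_cvars uf))) (negbTE (nq _ (fvars_cvars vf))); exact: E2 H.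
Qed.

(* Tree-like formulas are acyclic: they admit a rank function. *)
Lemma treelike_ranked x (phi : fm) : treelike x phi -> exists r, ranked phi x r.
Proof.
elim => {x phi}.
- by move=> x; exists (fun _ => 0).
- by move=> x j; exists (fun _ => 0); split => // c u v; rewrite in_cons orbF.
- move=> x phi1 phi2 _ [r1 [r1x H1]] _ [r2 [r2x H2]] Hsh.
  exists (fun v => if v \in fvars phi1 then r1 v else r2 v); split; first by case: ifP.
  have Eu u : u \in fvars phi2 -> (if u \in fvars phi1 then r1 u else r2 u) = r2 u.
    by move=> uf2; case: ifP => // uf1; rewrite (Hsh u uf1 uf2) r1x r2x.
  move=> c u v; rewrite mem_cat => /orP [] /[dup] /edge_vars [uf vf] H.
    by rewrite uf vf; exact: H1 _ _ _ H.
  rewrite Eu //; case: ifP => vf1; last by exact: H2 _ _ _ H.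
  by have := H2 _ _ _ H; rewrite (Hsh v vf1 vf) r2x.
- move=> x ch _ IH Hx Hpw.
  have [r [rx Hr]] := edge_block_ranked (fun p pc => IH p pc) Hx Hpw.
  exists r; split => // c u v /mem_edge_block [p pc [E|H]].
    by case: E => _ -> ->; rewrite rx (proj1 (Hr p pc)).
  exact: (proj2 (Hr p pc)) _ _ _ H.
Qed.

Lemma root_no_parent x (phi : fm) c u : treelike x phi -> AE c u x \notin phi.
Proof. by move=> /treelike_ranked [r [rx H]]; apply/negP => /H; rewrite rx. Qed.

Lemma root_mem x (phi : fm) : treelike x phi -> phi != [::] -> x \in fvars phi.
Proof.
elim => {x phi} //.
- by move=> x j _; rewrite mem_head.
- move=> x phi1 phi2 _ IH1 _ IH2 _; case: phi1 IH1 => [|a l] IH1; first by move/IH2.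
  by move=> _; rewrite fvars_cat mem_cat IH1.
- by move=> x [|p ch] //= _ _ _ _ _; rewrite mem_head.
Qed.

Lemma nonroot_parent x (phi : fm) v : treelike x phi -> v \in fvars phi -> v != x ->
  exists c u, AE c u v \in phi.
Proof.
move=> H; elim: H v => {x phi}.
- by [].
- by move=> x j v; rewrite /= in_cons in_nil orbF => /eqP ->; rewrite eqxx.
- move=> x phi1 phi2 _ IH1 _ IH2 _ v; rewrite fvars_cat mem_cat => /orP [] vf vx.
    by have [c [u H]] := IH1 v vf vx; exists c, u; rewrite mem_cat H.
  by have [c [u H]] := IH2 v vf vx; exists c, u; rewrite mem_cat H orbT.
- move=> x ch _ IH Hx Hpw v /fvarsP [a /mem_edge_block [p pc [E|ap]] va] vx.
    move: va; rewrite E /= !in_cons orbF => /orP [/eqP E'|/eqP ->].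
      by move: vx; rewrite E' eqxx.
    by exists p.1.1, x; apply: edge_block_edge.
  case: (eqVneq v p.1.2) => [->|vy]; first by exists p.1.1, x; apply: edge_block_edge.
  have [c [u H]] := IH p pc v (avars_sub ap va) vy.
  by exists c, u; exact: edge_block_child H.
Qed.

End Syntax.

Lemma bounded_max (P : nat -> Prop) B : P 0 -> (forall n, P n -> n <= B) ->
  exists m, P m /\ forall n, P n -> n <= m.
Proof.
move=> P0 HB.
have exP : exists n, `[< P n >] by exists 0; apply/asboolP.
have ubP n : `[< P n >] -> n <= B by move/asboolP; apply: HB.
case: (ex_maxnP exP ubP) => m /asboolP Pm Hm.
by exists m; split => // n Pn; apply: Hm; apply/asboolP.
Qed.

Section Depth.
Variables (Col : finType) (dl : nat).
Notation fm := (formula Col dl).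

Lemma chain_rank (phi : fm) (r : nat -> nat) :
  (forall c u v, AE c u v \in phi -> r u < r v) ->
  forall s u, chain phi u s -> r u + size s <= r (last u (map snd s)).
Proof.
move=> H; elim=> [|[c v] s IH] u /=; first by rewrite addn0.
move=> [Huv Hc]; have := IH v Hc; have := H _ _ _ Huv.
by rewrite addnS => h1 h2; apply: leq_trans h2; rewrite ltn_add2r.
Qed.

Lemma var_depth_exists (phi : fm) (r : nat -> nat) :
  (forall c u v, AE c u v \in phi -> r u < r v) ->
  forall v, exists n, var_depth phi v n.
Proof.
move=> H v.
pose P n := exists u s, chain phi u s /\ last u (map snd s) = v /\ size s = n.
have P0 : P 0 by exists v, [::].
have Pbound n : P n -> n <= r v.
  move=> [u [s [Hc [<- <-]]]]; apply: leq_trans (chain_rank H Hc); exact: leq_addl.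
have [m [[u [s [Hc [Hl Hs]]]] Hm]] := bounded_max P0 Pbound.
exists m; split; first by exists u, s.
by move=> u' s' Hc' Hl'; apply: Hm; exists u', s'.
Qed.

Lemma var_depth_unique (phi : fm) v n m : var_depth phi v n -> var_depth phi v m -> n = m.
Proof.
move=> [[u [s [Hc [Hl Hs]]]] Hn] [[u' [s' [Hc' [Hl' Hs']]]] Hm].
apply/eqP; rewrite eqn_leq; apply/andP; split.
  by rewrite -Hs; apply: Hm Hc Hl.
by rewrite -Hs'; apply: Hn Hc' Hl'.
Qed.

Lemma deepest_var (phi : fm) (vs : seq nat) :
  (forall v, exists n, var_depth phi v n) -> vs != [::] ->
  exists2 v, v \in vs & exists n, var_depth phi v n /\
     forall w m, w \in vs -> var_depth phi w m -> m <= n.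
Proof.
move=> Hex; elim: vs => [|a vs IH] // _.
have [na Ha] := Hex a.
case: vs IH => [|b vs] IH.
  exists a; first by rewrite mem_head.
  exists na; split => // w m; rewrite in_cons in_nil orbF => /eqP -> H.
  by rewrite (var_depth_unique H Ha).
have [v vin [n [Hv Hvm]]] := IH isT.
case: (leqP na n) => Hle.
  exists v; first by rewrite in_cons vin orbT.
  exists n; split => // w m; rewrite in_cons => /orP [/eqP -> H|wi H].
    by rewrite (var_depth_unique H Ha).
  exact: Hvm wi H.
exists a; first by rewrite mem_head.
exists na; split => // w m; rewrite in_cons => /orP [/eqP -> H|wi H].
  by rewrite (var_depth_unique H Ha).
by apply: leq_trans (ltnW Hle); exact: Hvm wi H.
Qed.

Lemma fdepth_exists (phi : fm) :
  (forall v, exists n, var_depth phi v n) -> exists n, fdepth phi n.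
Proof.
move=> Hex; case E: (fvars phi) => [|a l].
  by exists 0; split; [move=> v m; rewrite E | left].
have [v vin [n [Hv Hm]]] := deepest_var Hex (isT : a :: l != [::]).
exists n; split; first by move=> w m; rewrite E; apply: Hm.
by right; exists v; rewrite ?E.
Qed.

Lemma treelike_var_depth x (phi : fm) : treelike x phi -> forall v, exists n, var_depth phi v n.
Proof. by move=> /treelike_ranked [r [_ H]]; apply: var_depth_exists H. Qed.

Lemma treelike_fdepth x (phi : fm) : treelike x phi -> exists n, fdepth phi n.
Proof. by move/treelike_var_depth; apply: fdepth_exists. Qed.

Lemma chain_sub (phi psi : fm) u s : {subset phi <= psi} -> chain phi u s -> chain psi u s.
Proof.
move=> S; elim: s u => [|[c v] s IH] u //= [H1 H2].
by split; [apply: S | apply: IH].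
Qed.

Definition noedge (phi : fm) := forall c u v, AE c u v \notin phi.

Lemma noedge_var_depth (phi : fm) v m : noedge phi -> var_depth phi v m -> m = 0.
Proof.
move=> H [[u [[|[c w] s] [Hc [_ <-]]]] _] //.
by case: Hc => Hc _; move: (H c u w); rewrite Hc.
Qed.

Lemma noedge_fdepth (phi : fm) : noedge phi -> fdepth phi 0.
Proof.
move=> H; split; first by move=> v m _ /(noedge_var_depth H) ->.
case E: (fvars phi) => [|a l]; first by left.
right; exists a; first by rewrite mem_head.
split; first by exists a, [::].
by move=> u [|[c w] s] //= [Hc _]; move: (H c u w); rewrite Hc.
Qed.

Lemma depth0_noedge (phi : fm) x : treelike x phi -> fdepth phi 0 -> noedge phi.
Proof.
move=> Ht [Hd _] c u v; apply/negP => H.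
have [m Hm] := treelike_var_depth Ht v.
have Hm0 := Hd v m (proj2 (edge_vars H)) Hm.
by have := proj2 Hm u [:: (c, v)] (conj H I) erefl; rewrite /= => /leq_trans /(_ Hm0).
Qed.

Lemma depth0_unary x (phi : fm) : treelike x phi -> fdepth phi 0 ->
  forall a, a \in phi -> exists k : 'I_dl, a = AU k x.
Proof.
move=> Ht Hd [[[c u] v]|[k v]] ap; first by move: (depth0_noedge Ht Hd c u v); rewrite ap.
exists k; case: (eqVneq v x) => [->//|vx].
have [c [u H]] := nonroot_parent Ht (avars_sub ap (mem_head _ _)) vx.
by move: (depth0_noedge Ht Hd c u v); rewrite H.
Qed.

(* The child phi_k of the edge E^{c_k}(x, y_k) in a tree-like formula of
   depth n has depth at most n - 1: a deepest chain of phi_k starts at y_k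
   and extends by that edge to a chain of the whole formula. *)
Lemma child_depth (tau : fm) (dc : fm * seq (Col * nat * fm)) p n np :
  treelike x0 tau -> tau =i dc.1 ++ edge_block x0 dc.2 -> p \in dc.2 ->
  treelike p.1.2 p.2 -> fdepth tau n -> fdepth p.2 np -> np <= n.-1.
Proof.
move=> Tt Et pc Tp [Hn _] [_ [[_ ->]|[v vf [[u [s [Hc [Hl Hs]]]] Hm]]]] //.
have uf : u \in fvars p.2.
  case: s Hc Hl {Hs} => [|[c w] s'] /=; first by move=> _ E; rewrite E.
  by move=> [H _] _; exact: (proj1 (edge_vars H)).
have uy : u = p.1.2.
  case: (eqVneq u p.1.2) => // uny.
  have [c [w Hw]] := nonroot_parent Tp uf uny.
  by have := Hm w ((c, u) :: s) (conj Hw Hc) Hl; rewrite /= Hs ltnn.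
have sub : {subset p.2 <= tau}.
  by move=> a ap; rewrite Et mem_cat (edge_block_child x0 pc ap) orbT.
have Hc' : chain tau x0 ((p.1.1, p.1.2) :: s).
  split; first by rewrite Et mem_cat (edge_block_edge x0 pc) orbT.
  by rewrite -uy; apply: chain_sub sub Hc.
have [mv Hmv] := treelike_var_depth Tt v.
have h1 : np.+1 <= mv by have := proj2 Hmv _ _ Hc'; rewrite /= -Hs; apply; rewrite -uy.
have h2 := Hn v mv (fvars_sub sub vf) Hmv.
by case: n h2 {Hn} => [|n] h2 /=; [move: (leq_trans h1 h2) | rewrite -ltnS; apply: leq_trans h2].
Qed.

End Depth.

Section Renaming.
Variables (Col : finType) (dl : nat).
Notation fm := (formula Col dl).

(* Throughout, a renaming is a bijection pi with inverse pinv, and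
   psi = phi pi is expressed as  map (inst pi) phi =i psi. *)

Lemma inst_can (pi pinv : nat -> nat) (a : atom Col dl) :
  cancel pi pinv -> inst pinv (inst pi a) = a.
Proof. by move=> c; rewrite inst_comp -[RHS]inst_id; apply: inst_eq => v _ /=. Qed.

Lemma ren_sym (pi pinv : nat -> nat) (phi psi : fm) :
  cancel pi pinv -> map (inst pi) phi =i psi -> map (inst pinv) psi =i phi.
Proof.
move=> c H a; apply/mapP/idP.
  by move=> [b]; rewrite -H => /mapP [a' a'p ->] ->; rewrite inst_can.
move=> ap; exists (inst pi a); last by rewrite inst_can.
by rewrite -H; apply: map_f.
Qed.

Lemma ren_mem (pi : nat -> nat) (phi psi : fm) a :
  map (inst pi) phi =i psi -> a \in phi -> inst pi a \in psi.
Proof. by move=> H ap; rewrite -H; apply: map_f. Qed.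

Lemma ren_memP (pi : nat -> nat) (phi psi : fm) b :
  map (inst pi) phi =i psi -> b \in psi -> exists2 a, a \in phi & b = inst pi a.
Proof. by move=> H; rewrite -H => /mapP. Qed.

Lemma fvars_ren (pi : nat -> nat) (phi psi : fm) v :
  map (inst pi) phi =i psi -> v \in fvars phi -> pi v \in fvars psi.
Proof.
move=> H /fvarsP [a ap va]; apply: avars_sub (ren_mem H ap) _.
by rewrite inst_avars; apply: map_f.
Qed.

Lemma chain_ren (pi : nat -> nat) (phi psi : fm) u s :
  map (inst pi) phi =i psi -> chain phi u s ->
  chain psi (pi u) (map (fun cv => (cv.1, pi cv.2)) s).
Proof.
move=> H; elim: s u => [|[c v] s IH] u //= [H1 H2].
by split; [exact: (ren_mem H H1) | exact: IH H2].
Qed.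

Lemma last_ren (pi : nat -> nat) (u : nat) (s : seq (Col * nat)) :
  last (pi u) (map snd (map (fun cv => (cv.1, pi cv.2)) s)) = pi (last u (map snd s)).
Proof. by elim: s u => [|[c v] s IH] u //=. Qed.

Lemma var_depth_ren (pi pinv : nat -> nat) (phi psi : fm) v n :
  cancel pi pinv -> map (inst pi) phi =i psi ->
  var_depth phi v n -> var_depth psi (pi v) n.
Proof.
move=> c1 H [[u [s [Hc [Hl Hs]]]] Hm]; split.
  exists (pi u), (map (fun cv => (cv.1, pi cv.2)) s); split; first exact: chain_ren H Hc.
  by rewrite last_ren Hl size_map.
move=> u' s' Hc' Hl'.
have := chain_ren (ren_sym c1 H) Hc'; move/Hm.
by rewrite last_ren Hl' c1 size_map; apply.
Qed.

Lemma nil_of_nomem {T : eqType} (s : seq T) : (forall x, x \notin s) -> s = [::].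
Proof. by case: s => // a l /(_ a); rewrite mem_head. Qed.

Lemma fdepth_ren (pi pinv : nat -> nat) (phi psi : fm) n :
  cancel pi pinv -> cancel pinv pi -> map (inst pi) phi =i psi ->
  fdepth phi n -> fdepth psi n.
Proof.
move=> c1 c2 H [Hn Hw]; have H' := ren_sym c1 H; split.
  by move=> w m wf Hm; apply: Hn (fvars_ren H' wf) (var_depth_ren c2 H' Hm).
case: Hw => [[E ->]|[v vf Hv]].
  left; split => //; apply: nil_of_nomem => w; apply/negP => /(fvars_ren H').
  by rewrite E.
by right; exists (pi v); [exact: fvars_ren H vf | exact: var_depth_ren c1 H Hv].
Qed.

Lemma fanout_ren (pi : nat -> nat) (phi : fm) v :
  injective pi -> fanout (map (inst pi) phi) (pi v) = fanout phi v.
Proof.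
move=> inj; rewrite /fanout.
have -> : pmap (fun a : atom Col dl => match a with
      | inl (_, u, y) => if u == pi v then Some y else None | inr _ => None end)
      (map (inst pi) phi) =
   map pi (pmap (fun a : atom Col dl => match a with
      | inl (_, u, y) => if u == v then Some y else None | inr _ => None end) phi).
  elim: phi => [|[[[c u] y]|[j u]] phi IH] //=.
  by rewrite (inj_eq inj); case: ifP => _ //=; rewrite IH.
by rewrite undup_map_inj // size_map.
Qed.

Lemma edge_block_map (pi : nat -> nat) x (ch : seq (Col * nat * fm)) :
  map (inst pi) (edge_block x ch) =
  edge_block (pi x) (map (fun p => (p.1.1, pi p.1.2, map (inst pi) p.2)) ch).
Proof. by elim: ch => [|p ch IH] //; rewrite !edge_block_cons map_cat IH. Qed.

Lemma cvars_map (pi : nat -> nat) (p : Col * nat * fm) :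
  cvars (p.1.1, pi p.1.2, map (inst pi) p.2) = map pi (cvars p).
Proof. by rewrite /cvars /= fvars_map. Qed.

Lemma treelike_ren (pi : nat -> nat) x (phi : fm) :
  injective pi -> treelike x phi -> treelike (pi x) (map (inst pi) phi).
Proof.
move=> inj; elim => {x phi}.
- by move=> x; apply: TL_top.
- by move=> x j; apply: TL_unary.
- move=> x phi1 phi2 _ IH1 _ IH2 Hsh; rewrite map_cat; apply: TL_conj => // v.
  rewrite !fvars_map => /mapP [w1 w1f ->] /mapP [w2 w2f /inj E].
  by rewrite (Hsh w1) // E.
- move=> x ch _ IH Hx Hpw; rewrite edge_block_map; apply: TL_edges.
  + by move=> q /mapP [p pc ->] /=; apply: IH.
  + by move=> q /mapP [p pc ->]; rewrite cvars_map mem_map //; apply: Hx.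
  + rewrite pairwise_map; apply: sub_pairwise Hpw => p q Hpq.
    change (disj (cvars (p.1.1, pi p.1.2, map (inst pi) p.2))
                 (cvars (q.1.1, pi q.1.2, map (inst pi) q.2))).
    rewrite !cvars_map /disj all_map; apply/allP => v vp.
    apply/negP => /mapP [w wq /inj E].
    by move: (disjP Hpq wq); rewrite -E vp.
Qed.

Lemma dftreelike_ren (pi pinv : nat -> nat) d' d f y (phi : fm) :
  cancel pi pinv -> cancel pinv pi -> d' <= d ->
  dftreelike d' f y phi -> dftreelike d f (pi y) (map (inst pi) phi).
Proof.
move=> c1 c2 dd [Ht Hd]; split; first exact: treelike_ren (can_inj c1) Ht.
move=> v n vf Hv.
have H' := ren_sym c1 (fun a => erefl (a \in map (inst pi) phi)).
have [h1 h2] := Hd _ _ (fvars_ren H' vf) (var_depth_ren c2 H' Hv).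
split; first exact: leq_trans h1 dd.
rewrite -{1}(c2 v) fanout_ren; last exact: can_inj c1.
by apply: leq_trans h2 _; apply: leq_mul => //; exact: leq_sub2r.
Qed.

Lemma ren_eq_trans (phi psi chi : fm) :
  ren_eq phi psi -> ren_eq psi chi -> ren_eq phi chi.
Proof.
move=> [p1 [b1 H1]] [p2 [b2 H2]]; exists (p2 \o p1); split; first exact: bij_comp.
move=> a; rewrite -H2; apply/mapP/mapP.
  move=> [b bp ->]; exists (inst p1 b); first by rewrite -H1; apply: map_f.
  by rewrite inst_comp.
move=> [b]; rewrite -H1 => /mapP [a' a'p ->] ->; exists a' => //.
by rewrite inst_comp.
Qed.

Lemma ren_root (pi : nat -> nat) y z (phi psi : fm) :
  injective pi -> treelike y phi -> treelike z psi -> map (inst pi) phi =i psi ->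
  phi != [::] -> pi y = z.
Proof.
move=> inj Ty Tz H ne.
case: (eqVneq (pi y) z) => // nz.
have [c [u Hu]] := nonroot_parent Tz (fvars_ren H (root_mem Ty ne)) nz.
have [[[[c' u'] v']|[j w]] ap E] := ren_memP H Hu; last by [].
case: E => _ _ /inj Ev; rewrite -Ev in ap.
by move: (root_no_parent c' u' Ty); rewrite ap.
Qed.

End Renaming.

(* The swap of two variables, used to move the root y_k of a child to x. *)
Definition swap_vars (a b : nat) (v : nat) : nat :=
  if v == a then b else if v == b then a else v.

Lemma swap_varsK a b : cancel (swap_vars a b) (swap_vars a b).
Proof.
move=> v; rewrite /swap_vars.
case: (eqVneq v a) => [->|va]; first by case: (eqVneq b a) => [->|ba]; rewrite ?eqxx.
case: (eqVneq v b) => [->|vb]; first by rewrite eqxx.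
by rewrite (negbTE va) (negbTE vb).
Qed.

Lemma swap_vars_l a b : swap_vars a b a = b.
Proof. by rewrite /swap_vars eqxx. Qed.

Section Satisfaction.
Variables (Col : finType) (dl : nat) (K : eqType) (D : dataset Col dl K).
Notation fm := (formula Col dl).

Definition holds_from (phi : fm) (y : nat) (s : K) :=
  exists nu : nat -> K, nu y = s /\ forall a, a \in phi -> inst nu a \in D.

Lemma holds_ren (pi pinv : nat -> nat) (phi psi : fm) y z s :
  cancel pi pinv -> cancel pinv pi -> map (inst pi) phi =i psi -> pi y = z ->
  holds_from phi y s <-> holds_from psi z s.
Proof.
move=> c1 c2 H E; split.
  move=> [nu [Hy Ha]]; exists (nu \o pinv); split; first by rewrite /= -E c1.
  move=> b /(ren_memP H) [a ap ->]; rewrite inst_comp.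
  suff -> : inst (nu \o pinv \o pi) a = inst nu a by exact: Ha.
  by apply: inst_eq => v _ /=; rewrite c1.
move=> [mu [Hz Ha]]; exists (mu \o pi); split; first by rewrite /= E.
by move=> a ap; rewrite -inst_comp; apply: Ha; apply: ren_mem H ap.
Qed.

Lemma ren_eq_holds y (phi psi : fm) s :
  treelike y phi -> treelike x0 psi -> ren_eq phi psi ->
  (holds_from phi y s <-> holds_at D psi s).
Proof.
move=> Ty Tz [pi [[pinv c1 c2] H]].
case: (eqVneq phi [::]) => [E|ne].
  subst phi; have -> : psi = [::] by apply: nil_of_nomem => b; rewrite -H.
  by split => _; exists (fun _ => s).
exact: holds_ren c1 c2 H (ren_root (can_inj c1) Ty Tz H ne).
Qed.

Definition unary (phi : fm) := forall a, a \in phi -> exists k : 'I_dl, a = AU k x0.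

Lemma unary_holds (phi : fm) t : unary phi ->
  (holds_at D phi t <-> forall k : 'I_dl, AU k x0 \in phi -> AU k t \in D).
Proof.
move=> Hu; split; first by move=> [nu [Hx Ha]] k /Ha; rewrite /= Hx.
by move=> H; exists (fun _ => t); split => // a /[dup] /Hu [k ->] /H.
Qed.

Lemma unary_fails (phi : fm) t : unary phi -> ~ holds_at D phi t ->
  exists k : 'I_dl, AU k x0 \in phi /\ AU k t \notin D.
Proof.
move=> Hu Hh; apply: contrapT => Hne; apply: Hh; apply/(unary_holds t Hu) => k Hk.
by apply: contrapT => Hn; apply: Hne; exists k; split => //; exact/negP.
Qed.

Lemma unary_treelike (phi : fm) : unary phi -> treelike x0 phi.
Proof.
elim: phi => [|a phi IH] Hu; first exact: TL_top.
have [k Ea] := Hu a (mem_head _ _).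
change (treelike x0 ([:: a] ++ phi)); apply: TL_conj.
- by rewrite Ea; apply: TL_unary.
- by apply: IH => b bp; apply: Hu; rewrite in_cons bp orbT.
- by move=> v; rewrite Ea /= in_cons in_nil orbF => /eqP.
Qed.

Lemma unary_noedge (phi : fm) : unary phi -> noedge phi.
Proof. by move=> Hu c u v; apply/negP => /Hu [k]. Qed.

Lemma unary_dftreelike d f (phi : fm) : unary phi -> dftreelike d f x0 phi.
Proof.
move=> Hu; split; first exact: unary_treelike.
move=> v n _ /(noedge_var_depth (unary_noedge Hu)) ->; split => //.
suff -> : fanout phi v = 0 by [].
elim: phi Hu => [|[[[c u] y]|[j u]] phi IH] // Hu.
  by have [k] := Hu _ (mem_head _ _).
by apply: IH => a ap; apply: Hu; rewrite in_cons ap orbT.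
Qed.

Lemma glue_children (ch : seq (Col * nat * fm)) t :
  (forall p, p \in ch -> x0 \notin cvars p) ->
  pairwise (fun p q => disj (cvars p) (cvars q)) ch ->
  (forall p, p \in ch -> exists s, AE p.1.1 t s \in D /\ holds_from p.2 p.1.2 s) ->
  exists nu : nat -> K, nu x0 = t /\ forall p, p \in ch ->
     AE p.1.1 t (nu p.1.2) \in D /\ forall a, a \in p.2 -> inst nu a \in D.
Proof.
elim: ch => [|p ch IH] Hx; first by exists (fun _ => t).
rewrite pairwise_cons => /andP [/allP Hp Hpw] Hs.
have [nu' [nux Hnu']] := IH (fun q qc => Hx q (mem_behead (s := p :: ch) qc)) Hpw
  (fun q qc => Hs q (mem_behead (s := p :: ch) qc)).
have [s [Es [nup [nupy Hnup]]]] := Hs p (mem_head _ _).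
pose nu v := if v \in cvars p then nup v else nu' v.
exists nu; split; first by rewrite /nu (negbTE (Hx p (mem_head _ _))).
move=> q; rewrite in_cons => /orP [/eqP ->|qc].
  rewrite /nu root_cvars nupy; split => // a ap.
  suff -> : inst nu a = inst nup a by exact: Hnup a ap.
  by apply: inst_eq => v va; rewrite /nu (fvars_cvars (avars_sub ap va)).
have nq v : v \in cvars q -> v \notin cvars p by apply: disjP (Hp q qc).
have [E1 E2] := Hnu' q qc.
rewrite /nu (negbTE (nq _ (root_cvars q))); split => // a ap.
suff -> : inst nu a = inst nu' a by exact: E2 a ap.
apply: inst_eq => v va; rewrite /nu (negbTE (nq _ _)) //.
exact: fvars_cvars (avars_sub ap va).
Qed.

Lemma decomp_holds (tau : fm) (dc : fm * seq (Col * nat * fm)) t :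
  tau =i dc.1 ++ edge_block x0 dc.2 -> unary dc.1 ->
  (forall p, p \in dc.2 -> x0 \notin cvars p) ->
  pairwise (fun p q => disj (cvars p) (cvars q)) dc.2 ->
  (holds_at D tau t <-> holds_at D dc.1 t /\
     forall p, p \in dc.2 -> exists s, AE p.1.1 t s \in D /\ holds_from p.2 p.1.2 s).
Proof.
move=> Et Hu Hx Hpw; split.
  move=> [nu [nux Ha]]; split.
    by exists nu; split => // a ap; apply: Ha; rewrite Et mem_cat ap.
  move=> p pc; exists (nu p.1.2); split.
    by rewrite -nux; apply: (Ha (AE p.1.1 x0 p.1.2)); rewrite Et mem_cat edge_block_edge ?orbT.
  by exists nu; split => // a ap; apply: Ha; rewrite Et mem_cat (edge_block_child x0 pc ap) orbT.
move=> [H1 H2].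
have [nu [nux Hnu]] := glue_children Hx Hpw H2.
exists nu; split => // a; rewrite Et mem_cat => /orP [ap|].
  have [k Ea] := Hu a ap; move: H1 => /(unary_holds t Hu) /(_ k).
  by rewrite -Ea => /(_ ap); rewrite Ea /= nux.
move=> /mem_edge_block [p pc [->|ap]]; first by rewrite /= nux; exact: (proj1 (Hnu p pc)).
exact: (proj2 (Hnu p pc)).
Qed.

End Satisfaction.

(* If P is closed downwards along the list s, then the elements satisfying
   P form the prefix of length count P s. *)
Lemma count_prefix_lt {T : Type} (P : pred T) (s : seq T) x j :
  (forall i j, i <= j -> j < size s -> P (nth x s j) -> P (nth x s i)) ->
  j < size s -> P (nth x s j) -> j < count P s.
Proof.
move=> Hd js Pj.
have Hall : all P (take j.+1 s).
  apply/(all_nthP x) => i; rewrite size_takel // => ij.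
  by rewrite nth_take //; apply: Hd Pj.
rewrite -(cat_take_drop j.+1 s) count_cat; move: Hall; rewrite all_count => /eqP ->.
by rewrite size_takel // leq_addr.
Qed.

Lemma count_prefix_nth {T : Type} (P : pred T) (s : seq T) x i :
  (forall i j, i <= j -> j < size s -> P (nth x s j) -> P (nth x s i)) ->
  i < count P s -> P (nth x s i).
Proof.
move=> Hd; apply: contraLR => nP; rewrite -leqNgt.
have H0 : count P (drop i s) = 0.
  apply/eqP; rewrite -leqn0 leqNgt -has_count; apply/(has_nthP x) => -[k].
  rewrite size_drop nth_drop => ks Pk; move/negP: nP; apply.
  by apply: (Hd i (i + k)) => //; [rewrite leq_addr | rewrite -ltn_subRL].
rewrite -(cat_take_drop i s) count_cat H0 addn0.
apply: leq_trans (count_size _ _) _; rewrite size_take; case: ifP => //.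
by move/negbT; rewrite -leqNgt.
Qed.

Section Network.
Variables (Col : finType) (dl d f : nat) (Pi : seq (rule Col dl))
  (tau : seq (formula Col dl))
  (dec : nat -> formula Col dl * seq (Col * nat * formula Col dl)).
Notation tau_ i := (nth [::] tau i).
Notation dims := (dimsPi d tau).
Notation N := (NPi d Pi tau dec).

Hypothesis tau_dftreelike : forall i, i < size tau -> dftreelike d f x0 (tau_ i).
Hypothesis tau_complete : forall phi : formula Col dl, dftreelike d f x0 phi ->
  exists i, [/\ i < size tau, ren_eq phi (tau_ i) &
    forall i', i' < size tau -> ren_eq phi (tau_ i') -> i' = i].
Hypothesis tau_sorted : forall i j ni nj, i <= j -> j < size tau ->
  fdepth (tau_ i) ni -> fdepth (tau_ j) nj -> ni <= nj.
Hypothesis dec_ok : forall i, i < size tau -> decomp d f (tau_ i) (dec i).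

Lemma tau_treelike i : i < size tau -> treelike x0 (tau_ i).
Proof. by move/tau_dftreelike => []. Qed.

Lemma tau_index_child y (phi : formula Col dl) : dftreelike d.-1 f y phi ->
  exists2 j, j < size tau & ren_eq phi (tau_ j).
Proof.
move=> Hphi.
have := dftreelike_ren (swap_varsK y x0) (swap_varsK y x0) (leq_pred d) Hphi.
rewrite swap_vars_l => /tau_complete [j [js Hj _]]; exists j => //.
apply: ren_eq_trans Hj; exists (swap_vars y x0); split => //.
exact: Bijective (swap_varsK y x0) (swap_varsK y x0).
Qed.

Definition depth_le (L : nat) (phi : formula Col dl) : bool :=
  `[< exists n, fdepth phi n /\ n <= L >].

Lemma depth_le_down L i j : i <= j -> j < size tau ->
  depth_le L (tau_ j) -> depth_le L (tau_ i).
Proof.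
move=> ij js /asboolP [nj [Hj Hle]]; apply/asboolP.
have [ni Hi] := treelike_fdepth (tau_treelike (leq_ltn_trans ij js)).
by exists ni; split => //; apply: leq_trans Hle; apply: tau_sorted Hi Hj.
Qed.

(* Hence the positions of layer l are exactly the tau_i of depth <= l-1. *)
Lemma dimsE l : 0 < l < d.+2 -> dims l = count (depth_le l.-1) tau.
Proof. by case: l => // l /andP [_ H]; rewrite /dimsPi /= H. Qed.

Lemma dims_index l i : 0 < l < d.+2 -> i < dims l ->
  i < size tau /\ exists n, fdepth (tau_ i) n /\ n <= l.-1.
Proof.
move=> Hl; rewrite dimsE // => Hi; split; first exact: leq_trans Hi (count_size _ _).
by apply/asboolP; apply: count_prefix_nth Hi => i0 j0; apply: depth_le_down.
Qed.

Lemma dims_lt l j n : 0 < l < d.+2 -> j < size tau -> fdepth (tau_ j) n -> n <= l.-1 ->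
  j < dims l.
Proof.
move=> Hl js Hn Hle; rewrite dimsE //.
apply: count_prefix_lt js _ => [i0 j0|]; first exact: depth_le_down.
by apply/asboolP; exists n.
Qed.

Lemma dims_mono l : 0 < l -> l.+1 < d.+2 -> dims l <= dims l.+1.
Proof.
move=> l0 ld; rewrite (dimsE (l := l)) ?l0 ?(ltn_trans _ ld) // dimsE //=.
apply: sub_count => phi /asboolP [n [Hn Hle]]; apply/asboolP.
by exists n; split => //; exact: leq_trans Hle (leq_pred l).
Qed.

Lemma matA_bit l i j : bit (matAPi d Pi tau dec l i j).
Proof. by rewrite /matAPi; case: ifP => _; [right|left]. Qed.
Lemma matB_bit l c i j : bit (matBPi d tau dec l c i j).
Proof. by rewrite /matBPi; case: ifP => _; [right|left]. Qed.
Lemma matA1 l i j : matAPi d Pi tau dec l i j = 1%R <-> Aent d Pi tau dec l i j.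
Proof. by rewrite /matAPi; case: asboolP => H; split => // E; lra. Qed.
Lemma matB1 l c i j : matBPi d tau dec l c i j = 1%R <-> Bent d tau dec l c i j.
Proof. by rewrite /matBPi; case: asboolP => H; split => // E; lra. Qed.
Lemma matA0 l i j : ~ Aent d Pi tau dec l i j -> matAPi d Pi tau dec l i j = 0%R.
Proof. by rewrite /matAPi; case: asboolP. Qed.
Lemma matB0 l c i j : ~ Bent d tau dec l c i j -> matBPi d tau dec l c i j = 0%R.
Proof. by rewrite /matBPi; case: asboolP. Qed.

Variables (K : eqType) (D : dataset Col dl K).

Lemma layerS l t i : layer N D l.+1 t i =
  relu (\big[Rplus/0%R]_(j < dims l) (matAPi d Pi tau dec l.+1 i j * layer N D l t j)
      + \big[Rplus/0%R]_(c : Col) \big[Rplus/0%R]_(j < dims l)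
          (matBPi d tau dec l.+1 c i j * aggmax [seq layer N D l s | s <- nbrs D c t] j)
      + biasPi d Pi tau dec l.+1 i)%R.
Proof. by []. Qed.

Lemma nbrsP c t s : s \in nbrs D c t <-> AE c t s \in D.
Proof.
rewrite mem_filter; split => [/andP [] //|H]; rewrite H /= /terms mem_undup.
by apply: (avars_sub H); rewrite /= !inE eqxx orbT.
Qed.

Lemma nbrs_terms c t s : s \in nbrs D c t -> s \in terms D.
Proof. by rewrite mem_filter => /andP []. Qed.

Definition layer_correct l := forall i t, i < dims l -> t \in terms D ->
  (holds_at D (tau_ i) t -> layer N D l t i = 1%R) /\
  (~ holds_at D (tau_ i) t -> layer N D l t i = 0%R).

Lemma layer_correct_bit l i t : layer_correct l -> i < dims l -> t \in terms D ->
  bit (layer N D l t i).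
Proof.
move=> C il tD; have [C1 C0] := C i t il tD.
by case: (pselect (holds_at D (tau_ i) t)) => H; [right; apply: C1 | left; apply: C0].
Qed.

(* Layer 1: the formulas of depth 0 are conjunctions of unary atoms, and the
   unit for tau_i is the conjunction gate over the features U_k with
   U_k(x) in tau_i. *)
Lemma layer1_correct : layer_correct 1.
Proof.
move=> i t il tD.
have [is_ [n [Hn nle]]] := dims_index (isT : 0 < 1 < d.+2) il.
have Hu : unary (tau_ i).
  by apply: depth0_unary (tau_treelike is_) _; move: nle Hn; rewrite leqn0 => /eqP ->.
have feat_bit s j : bit (feat D s j) by rewrite /feat; case: ifP => _; [right|left].
have noB c j : matBPi d tau dec 1 c i j = 0%R by apply: matB0 => -[].
have Ha (j : 'I_(dims 0)) : bit (matAPi d Pi tau dec 1 i j) /\ bit (feat D t j).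
  by split; [apply: matA_bit | apply: feat_bit].
have Hb c (j : 'I_(dims 0)) :
    bit (matBPi d tau dec 1 c i j) /\ bit (aggmax [seq feat D s | s <- nbrs D c t] j).
  by split; [apply: matB_bit | exact: (aggmax_bits (fun s _ => feat_bit s j)).2].
have [gate_on gate_off] := relu_gate (index_enum 'I_(dims 0)) (index_enum Col) Ha Hb.
rewrite layerS [biasPi _ _ _ _ _ _]/biasPi il /=; split => Hh.
  apply: gate_on; split => [j _ /matA1 [_ _ _ /= [k [Ek Hk]]]|c j _ _]; last by rewrite noB; lra.
  rewrite /feat; case: existsP => // -[]; exists k.
  by rewrite (proj1 (unary_holds D t Hu) Hh k Hk) andbT; apply/eqP.
have [k [Hk Hk']] := unary_fails Hu Hh.
apply: gate_off; left; exists (k : 'I_(dims 0)); first by rewrite mem_index_enum.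
split; first by apply/matA1; split => //=; exists k.
rewrite /feat; case: existsP => // -[k' /andP [/eqP E Hk'']].
by move: Hk'; rewrite -(val_inj E) Hk''.
Qed.

Section Step.
Variable l : nat.
Hypothesis l_pos : 0 < l.
Hypothesis l_lt : l.+1 < d.+2.
Hypothesis IH : layer_correct l.

Let l_range : 0 < l < d.+2.
Proof. by rewrite l_pos (ltn_trans _ l_lt). Qed.
Let succ_range : 0 < l.+1 < d.+2.
Proof. by rewrite l_lt. Qed.
Let succ_ne1 : (l.+1 == 1) = false.
Proof. by rewrite eqSS; apply/negbTE; rewrite -lt0n. Qed.

Lemma tau_treelike_dims j : j < dims l -> treelike x0 (tau_ j).
Proof. by move/(dims_index l_range) => [/tau_treelike]. Qed.

(* Positions already present at layer l are copied by the identity block. *)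
Lemma layer_copy i t : i < dims l -> t \in terms D -> layer N D l.+1 t i = layer N D l t i.
Proof.
move=> iold tD.
have sumA : (\big[Rplus/0%R]_(j < dims l) (matAPi d Pi tau dec l.+1 i j * layer N D l t j)
             = layer N D l t i)%R.
  rewrite (bigD1 (Ordinal iold)) //= big1 => [|j /negbTE jne].
    suff -> : matAPi d Pi tau dec l.+1 i i = 1%R by lra.
    apply/matA1; split => //; first exact: leq_trans iold (dims_mono l_pos l_lt).
    by rewrite /= succ_ne1 l_lt iold.
  rewrite matA0; first lra.
  move=> [_ _ _]; rewrite /= succ_ne1 l_lt iold => E.
  by move: jne; rewrite -(inj_eq val_inj) /= -E eqxx.
have sumB : (\big[Rplus/0%R]_(c : Col) \big[Rplus/0%R]_(j < dims l)
     (matBPi d tau dec l.+1 c i j * aggmax [seq layer N D l s | s <- nbrs D c t] j) = 0)%R.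
  rewrite big1 // => c _; rewrite big1 // => j _; rewrite matB0; first lra.
  by move=> [_ /andP [/=]]; rewrite leqNgt iold.
have bias0 : biasPi d Pi tau dec l.+1 i = 0%R.
  by rewrite /biasPi succ_ne1 /= (leqNgt (dims l) i) iold andbF.
rewrite layerS sumA sumB bias0 /relu Rplus_0_r Rplus_0_r.
by case: (layer_correct_bit IH iold tD) => ->; rewrite /Rmax; case: Rle_dec; lra.
Qed.

Lemma agg_correct c (j : 'I_(dims l)) t :
  (aggmax [seq layer N D l s | s <- nbrs D c t] j = 1%R <->
     exists2 s, s \in nbrs D c t & layer N D l s j = 1%R) /\
  bit (aggmax [seq layer N D l s | s <- nbrs D c t] j).
Proof.
by apply: aggmax_bits => s /nbrs_terms sD; apply: layer_correct_bit IH (ltn_ord j) sD.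
Qed.

Variable i : nat.
Hypothesis i_new : dims l <= i.
Hypothesis i_lt : i < dims l.+1.

Let i_index : i < size tau /\ exists n, fdepth (tau_ i) n /\ n <= l.
Proof. exact: dims_index succ_range i_lt. Qed.
Let i_decomp : decomp d f (tau_ i) (dec i).
Proof. exact: dec_ok (proj1 i_index). Qed.

(* The unary part phi_{i,0} has depth 0 and is listed at layer l ... *)
Lemma unary_part_index : exists2 j, j < dims l & ren_eq (dec i).1 (tau_ j).
Proof.
have [_ [Hu _]] := i_decomp.
have [j [js Hj _]] := tau_complete (unary_dftreelike d f Hu).
exists j => //; have [pi [[pinv c1 c2] Hpi]] := Hj.
exact: dims_lt l_range js (fdepth_ren c1 c2 Hpi (noedge_fdepth (unary_noedge Hu))) (leq0n _).
Qed.

(* ... and so is every child phi_{i,k}, which has depth at most l - 1. *)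
Lemma child_index p : p \in (dec i).2 -> exists2 j, j < dims l & ren_eq p.2 (tau_ j).
Proof.
move=> pc; have [Et [_ [Hch _]]] := i_decomp.
have [is_ [n [Hn nle]]] := i_index.
have [j js Hj] := tau_index_child (Hch p pc).
have [np Hnp] := treelike_fdepth (proj1 (Hch p pc)).
have npl := child_depth (tau_treelike is_) Et pc (proj1 (Hch p pc)) Hn Hnp.
exists j => //; have [pi [[pinv c1 c2] Hpi]] := Hj.
apply: dims_lt l_range js (fdepth_ren c1 c2 Hpi Hnp) _.
by apply: leq_trans npl _; rewrite -!subn1 leq_sub2r.
Qed.

Lemma matA_new (j : 'I_(dims l)) :
  matAPi d Pi tau dec l.+1 i j = 1%R <-> ren_eq (dec i).1 (tau_ j).
Proof.
rewrite matA1 /Aent /= succ_ne1 l_lt (ltnNge i (dims l)) i_new /=.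
by split => [[_ _ _ H]|H].
Qed.

Lemma matB_new c (j : 'I_(dims l)) : matBPi d tau dec l.+1 c i j = 1%R <->
  exists2 p, p \in (dec i).2 & p.1.1 = c /\ ren_eq p.2 (tau_ j).
Proof. by rewrite matB1 /Bent /= ltnS l_pos l_lt i_new i_lt; split => [[_ _ _ H]|H]. Qed.

Lemma new_gate t : t \in terms D ->
  ((forall j : 'I_(dims l), ren_eq (dec i).1 (tau_ j) -> layer N D l t j = 1%R) /\
   (forall (j : 'I_(dims l)) p, p \in (dec i).2 -> ren_eq p.2 (tau_ j) ->
      aggmax [seq layer N D l s | s <- nbrs D p.1.1 t] j = 1%R) ->
   layer N D l.+1 t i = 1%R) /\
  ((exists j : 'I_(dims l), ren_eq (dec i).1 (tau_ j) /\ layer N D l t j = 0%R) \/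
   (exists (j : 'I_(dims l)) p, [/\ p \in (dec i).2, ren_eq p.2 (tau_ j) &
      aggmax [seq layer N D l s | s <- nbrs D p.1.1 t] j = 0%R]) ->
   layer N D l.+1 t i = 0%R).
Proof.
move=> tD.
have bias_eq : biasPi d Pi tau dec l.+1 i = (1 - \big[Rplus/0%R]_(j < dims l)
     (matAPi d Pi tau dec l.+1 i j + \big[Rplus/0%R]_(c : Col) matBPi d tau dec l.+1 c i j))%R.
  by rewrite /biasPi succ_ne1 /= l_lt i_new i_lt.
have Ha (j : 'I_(dims l)) : bit (matAPi d Pi tau dec l.+1 i j) /\ bit (layer N D l t j).
  by split; [apply: matA_bit | apply: layer_correct_bit IH (ltn_ord j) tD].
have Hb c (j : 'I_(dims l)) : bit (matBPi d tau dec l.+1 c i j) /\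
    bit (aggmax [seq layer N D l s | s <- nbrs D c t] j).
  by split; [apply: matB_bit | exact: (agg_correct c j t).2].
have [gate_on gate_off] := relu_gate (index_enum 'I_(dims l)) (index_enum Col) Ha Hb.
rewrite layerS bias_eq; split.
  move=> [HA HB]; apply: gate_on; split => [j _ /matA_new|c j _ _ /matB_new [p pc [<- Hr]]].
    exact: HA.
  exact: HB pc Hr.
move=> [[j [Hr H0]]|[j [p [pc Hr H0]]]]; apply: gate_off.
  by left; exists j; rewrite ?mem_index_enum //; split => //; apply/matA_new.
by right; exists p.1.1, j; split; rewrite ?mem_index_enum //; apply/matB_new; exists p.
Qed.

(* If tau_i holds at t, all parts of its decomposition hold, so every
   input of the gate with weight 1 is 1. *)
Lemma new_holds t : t \in terms D -> holds_at D (tau_ i) t -> layer N D l.+1 t i = 1%R.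
Proof.
move=> tD Hh; have [Et [Hu [Hch [Hx Hpw]]]] := i_decomp.
have [Hh0 Hhch] := (decomp_holds D t Et Hu Hx Hpw).1 Hh.
apply: (new_gate tD).1; split.
  move=> j Hr; apply: (IH (ltn_ord j) tD).1.
  exact: (ren_eq_holds D t (unary_treelike Hu) (tau_treelike_dims (ltn_ord j)) Hr).1 Hh0.
move=> j p pc Hr; have [s [Es Hs]] := Hhch p pc.
have sn : s \in nbrs D p.1.1 t by apply/nbrsP.
apply/(agg_correct p.1.1 j t).1; exists s => //.
apply: (IH (ltn_ord j) (nbrs_terms sn)).1.
exact: (ren_eq_holds D s (proj1 (Hch p pc)) (tau_treelike_dims (ltn_ord j)) Hr).1 Hs.
Qed.

(* If tau_i fails at t, either phi_{i,0} fails at t or some child phi_{i,k}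
   fails at every c_k-successor of t; either way a gate input is 0. *)
Lemma new_fails t : t \in terms D -> ~ holds_at D (tau_ i) t -> layer N D l.+1 t i = 0%R.
Proof.
move=> tD Hh; have [Et [Hu [Hch [Hx Hpw]]]] := i_decomp.
apply: (new_gate tD).2.
case: (pselect (holds_at D (dec i).1 t)) => H0; last first.
  left; have [j jl Hr] := unary_part_index; exists (Ordinal jl); split => //.
  apply: (IH jl tD).2 => Hj; apply: H0.
  exact: (ren_eq_holds D t (unary_treelike Hu) (tau_treelike_dims jl) Hr).2 Hj.
right.
have [p [pc Hp]] : exists p, p \in (dec i).2 /\
    ~ exists s, AE p.1.1 t s \in D /\ holds_from D p.2 p.1.2 s.
  apply: contrapT => Hne; apply: Hh; apply/(decomp_holds D t Et Hu Hx Hpw); split => // p pc.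
  by apply: contrapT => Hn; apply: Hne; exists p.
have [j jl Hr] := child_index pc.
exists (Ordinal jl), p; split => //.
case: (agg_correct p.1.1 (Ordinal jl) t).2 => // /(agg_correct _ _ _).1 [s sn Hs].
exfalso; apply: Hp; exists s; split; first exact/nbrsP.
apply/(ren_eq_holds D s (proj1 (Hch p pc)) (tau_treelike_dims jl) Hr).
by apply: contrapT => Hn; move: Hs; rewrite /= (IH jl (nbrs_terms sn)).2 //; lra.
Qed.

End Step.

Lemma layer_succ_correct l : 0 < l -> l.+1 < d.+2 -> layer_correct l -> layer_correct l.+1.
Proof.
move=> l_pos l_lt IH i t il tD.
case: (ltnP i (dims l)) => iold; last by split; [apply: new_holds | apply: new_fails].
by rewrite (layer_copy l_pos l_lt IH iold tD); exact: IH.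
Qed.

Lemma layer_correct_all l : 0 < l < d.+2 -> layer_correct l.
Proof.
elim: l => // [[|l] IH] /andP [_ ld]; first exact: layer1_correct.
by apply: layer_succ_correct => //; apply: IH; rewrite /= (ltn_trans _ ld).
Qed.

End Network.

Theorem lemma7 (Col : finType) (dl d f : nat) (Pi : seq (rule Col dl))
  (tau : seq (formula Col dl))
  (dec : nat -> formula Col dl * seq (Col * nat * formula Col dl)) :
  (* Pi is a program of (d,f)-tree-like rules *)
  (forall r, r \in Pi -> dfrule d f r) ->
  (* tau lists the (d,f)-tree-like formulas for x up to renaming, each once *)
  (forall i, i < size tau -> dftreelike d f x0 (nth [::] tau i)) ->
  (forall phi : formula Col dl, dftreelike d f x0 phi ->
     exists i, [/\ i < size tau, ren_eq phi (nth [::] tau i) &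
       forall i', i' < size tau -> ren_eq phi (nth [::] tau i') -> i' = i]) ->
  (* ordered by non-decreasing depth *)
  (forall i j ni nj, i <= j -> j < size tau ->
     fdepth (nth [::] tau i) ni -> fdepth (nth [::] tau j) nj -> ni <= nj) ->
  (* the chosen decompositions of the tau_i *)
  (forall i, i < size tau -> decomp d f (nth [::] tau i) (dec i)) ->
  forall (K : eqType) (D : dataset Col dl K) (l i : nat) (t : K),
    1 <= l < d.+2 -> i < dimsPi d tau l -> t \in terms D ->
    (holds_at D (nth [::] tau i) t -> layer (NPi d Pi tau dec) D l t i = 1%R) /\
    (~ holds_at D (nth [::] tau i) t -> layer (NPi d Pi tau dec) D l t i = 0%R).
Proof.
move=> _ tau_df tau_complete tau_sorted dec_ok K D l i t l_range il tD.
exact: (layer_correct_all Pi tau_df tau_complete tau_sorted dec_ok l_range il tD).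
Qed.
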